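(* Let $\lambda>0$, let $f(x)=\lambda e^{-\lambda x}$ ($x\geq 0$) be the exponential density with hazard rate $\lambda$, and let $X$ have the $\Gamma(n,\lambda)$ distribution (density $\lambda^n x^{n-1}e^{-\lambda x}/(n-1)!$) with integer $n\geq 2$. For every integer $s\geq 2$, the density $g_s$ of the $s$-iterated distribution induced by $X$ satisfies $$g_s(x)=f_s^{n*}(x)=\frac{n-1}{n+s-2}\,f\ast f_s^{(n-1)*}(x)+\frac{s-1}{n+s-2}\,f(x),\qquad x\geq 0.$$
   Context: For a nonnegative absolutely continuous random variable $Y$ with density $f_Y$, set $\overline{T}_{Y,0}=f_Y$, $\mu_{Y,0}=1$, and for integers $s\geq 1$ define recursively $\overline{T}_{Y,s}(x)=\frac{1}{\mu_{Y,s-1}}\int_x^\infty\overline{T}_{Y,s-1}(t)\,dt$ and $\mu_{Y,s}=\int_0^\infty\overline{T}_{Y,s}(t)\,dt$. $\overline{T}_{Y,s}$ is the tail of the $s$-iterated distribution induced by $Y$, whose density is $\overline{T}_{Y,s-1}/\mu_{Y,s-1}$. For $k\geq 1$, $f_s^{k*}$ denotes the density of the $s$-iterated distribution induced by $S_k=X_1+\cdots+X_k$, where $X_i$ are i.i.d. with density $f$ (so $S_k\sim\Gamma(k,\lambda)$). Convolution: $g\ast h(x)=\int_0^x g(t)h(x-t)\,dt$. *)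

From Stdlib Require Import Reals Factorial.
From Coquelicot Require Import Coquelicot.
Open Scope R_scope.

Definition int_to_infty (h : R -> R) (a : R) : R :=
  RInt_gen h (at_point a) (Rbar_locally p_infty).

Fixpoint iter_pair (fY : R -> R) (s : nat) : (R -> R) * R :=
  match s with
  | O => (fY, 1)
  | S s' =>
      let (T, m) := iter_pair fY s' in
      let T' := fun x => / m * int_to_infty T x in
      (T', int_to_infty T' 0)
  end.

Definition Tbar (fY : R -> R) (s : nat) : R -> R := fst (iter_pair fY s).
Definition mu (fY : R -> R) (s : nat) : R := snd (iter_pair fY s).

(* density of the s-iterated distribution (s >= 1): Tbar_{Y,s-1} / mu_{Y,s-1} *)
Definition iter_density (fY : R -> R) (s : nat) : R -> R :=
  fun x => Tbar fY (pred s) x / mu fY (pred s).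

Definition conv (g h : R -> R) (x : R) : R :=
  RInt (fun t => g t * h (x - t)) 0 x.

Definition exp_density (lam : R) (x : R) : R :=
  if Rle_dec 0 x then lam * exp (- lam * x) else 0.

Definition gamma_density (k : nat) (lam : R) (x : R) : R :=
  if Rle_dec 0 x then lam ^ k * x ^ (k - 1) * exp (- lam * x) / INR (Factorial.fact (k - 1))
  else 0.

Definition f_iter_conv (lam : R) (s k : nat) : R -> R :=
  iter_density (gamma_density k lam) s.

(* For X ~ Gamma(m+1, lam), the s-th iterated tail of X is proportional on [0, oo) to the
   s-fold cumulative sum P_{s,m} of the Poisson weights e^(-lam x) (lam x)^j / j!, because
   P_{s+1,m}' = -lam P_{s,m} and P_{s+1,m} vanishes at infinity; the normalising constant is
   P_{s,m}(0) = binom(m+s-1, s-1).  Convolving with the exponential density raises m by one,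
   up to a boundary term proportional to the exponential density itself, and Pascal's rule
   for the normalising constants yields the weights (n-1)/(n+s-2) and (s-1)/(n+s-2). *)

From Stdlib Require Import Reals Lra Lia Factorial FunctionalExtensionality.
From Coquelicot Require Import Coquelicot.
Open Scope R_scope.

Section PoissonWeights.

Variable lam : R.

Definition poisson_weight (j : nat) (x : R) : R :=
  (lam * x) ^ j / INR (fact j) * exp (- lam * x).

(* [poisson_cumsum 1 m x] is P(Poisson(lam x) <= m), i.e. the tail of Gamma(m+1, lam) at x;
   each further level takes partial sums in [m] once more. *)
Fixpoint poisson_cumsum (k m : nat) (x : R) : R :=
  match k with
  | O => poisson_weight m x
  | S k' => sum_n (fun i => poisson_cumsum k' i x) m
  end.

Lemma poisson_weight_O_at0 : poisson_weight 0 0 = 1.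
Proof. unfold poisson_weight. rewrite !Rmult_0_r, exp_0. simpl. field. Qed.

Lemma poisson_weight_S_at0 j : poisson_weight (S j) 0 = 0.
Proof. unfold poisson_weight. rewrite Rmult_0_r. simpl. unfold Rdiv. ring. Qed.

Lemma poisson_weight_O_derive x :
  is_derive (poisson_weight 0) x (- lam * poisson_weight 0 x).
Proof. unfold poisson_weight. auto_derive; auto. simpl. field. Qed.

Lemma poisson_weight_S_derive j x :
  is_derive (poisson_weight (S j)) x
    (lam * poisson_weight j x - lam * poisson_weight (S j) x).
Proof.
  unfold poisson_weight. rewrite fact_simpl, mult_INR, S_INR.
  pose proof (INR_fact_lt_0 j). pose proof (pos_INR j).
  auto_derive; [split; auto; apply Rgt_not_eq; nra|].
  change (match j with 0%nat => 1 | S _ => INR j + 1 end) with (INR (S j)).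
  rewrite S_INR. simpl pow. field. lra.
Qed.

Lemma poisson_weight_ge0 j x : 0 <= lam * x -> 0 <= poisson_weight j x.
Proof.
  intro H. unfold poisson_weight. apply Rmult_le_pos; [|left; apply exp_pos].
  apply Rdiv_le_0_compat; [apply pow_le; lra | apply INR_fact_lt_0].
Qed.

(* Drop all but the (j+1)-th term of the Taylor series of exp (lam x). *)
Lemma poisson_weight_le j x :
  0 < lam * x -> poisson_weight j x <= INR (S j) / (lam * x).
Proof.
  intro Hy. set (y := lam * x) in *.
  assert (Hterm : y ^ S j / INR (fact (S j)) <= exp y).
  { eapply Rle_trans; [|apply (exp_ge_taylor y (S j)); lra].
    simpl sum_f_R0 at 1. rewrite <- (Rplus_0_l (y ^ S j / _)) at 1.
    apply Rplus_le_compat_r, cond_pos_sum. intro i.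
    apply Rdiv_le_0_compat; [apply pow_le; lra | apply INR_fact_lt_0]. }
  assert (Hexp : exp y * exp (- y) = 1) by (rewrite <- exp_plus, Rplus_opp_r; apply exp_0).
  unfold poisson_weight. fold y. replace (- lam * x) with (- y) by (unfold y; ring).
  pose proof (INR_fact_lt_0 j). assert (0 < INR (S j)) by (apply lt_0_INR; lia).
  replace (y ^ j / INR (fact j) * exp (- y))
    with (y ^ S j / INR (fact (S j)) * (INR (S j) / y * exp (- y)))
    by (rewrite fact_simpl, mult_INR; simpl pow; field; lra).
  apply Rle_trans with (exp y * (INR (S j) / y * exp (- y))).
  - apply Rmult_le_compat_r; [|exact Hterm].
    apply Rmult_le_pos; [apply Rdiv_le_0_compat|left; apply exp_pos]; lra.
  - right. rewrite (Rmult_comm (_ / y)), <- Rmult_assoc, Hexp. ring.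
Qed.

Lemma poisson_cumsum_S_O k x : poisson_cumsum (S k) 0 x = poisson_cumsum k 0 x.
Proof. exact (sum_O (fun i => poisson_cumsum k i x)). Qed.

Lemma poisson_cumsum_S_S k m x :
  poisson_cumsum (S k) (S m) x = poisson_cumsum (S k) m x + poisson_cumsum k (S m) x.
Proof. exact (sum_Sn (fun i => poisson_cumsum k i x) m). Qed.

Lemma poisson_cumsum_O_r k x : poisson_cumsum k 0 x = poisson_weight 0 x.
Proof. induction k as [|k IHk]; [reflexivity|]. now rewrite poisson_cumsum_S_O. Qed.

Lemma poisson_cumsum_derive k m x :
  is_derive (poisson_cumsum (S k) m) x (- lam * poisson_cumsum k m x).
Proof.
  revert m x. induction k as [|k IHk]; induction m as [|m IHm]; intro x.
  - eapply is_derive_ext; [intro t; symmetry; apply poisson_cumsum_S_O|].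
    apply poisson_weight_O_derive.
  - eapply is_derive_ext; [intro t; symmetry; apply poisson_cumsum_S_S|].
    replace (- lam * poisson_cumsum 0 (S m) x)
      with (- lam * poisson_cumsum 0 m x
            + (lam * poisson_weight m x - lam * poisson_weight (S m) x))
      by (simpl; ring).
    apply (is_derive_plus (poisson_cumsum 1 m) (poisson_weight (S m))).
    + apply IHm.
    + apply poisson_weight_S_derive.
  - eapply is_derive_ext; [intro t; symmetry; apply poisson_cumsum_S_O|].
    rewrite poisson_cumsum_S_O. apply IHk.
  - eapply is_derive_ext; [intro t; symmetry; apply poisson_cumsum_S_S|].
    rewrite poisson_cumsum_S_S, Rmult_plus_distr_l.
    apply (is_derive_plus (poisson_cumsum (S (S k)) m) (poisson_cumsum (S k) (S m))).
    + apply IHm.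
    + apply IHk.
Qed.

Lemma continuous_poisson_cumsum k m x : continuous (poisson_cumsum k m) x.
Proof.
  apply (ex_derive_continuous (K := R_AbsRing) (V := R_NormedModule)).
  destruct k as [|k]; [destruct m as [|m]|].
  - eexists. apply poisson_weight_O_derive.
  - eexists. apply poisson_weight_S_derive.
  - eexists. apply poisson_cumsum_derive.
Qed.

Lemma poisson_cumsum_at0 k m : poisson_cumsum (S k) m 0 = Binomial.C (m + k) k.
Proof.
  revert m. induction k as [|k IHk]; induction m as [|m IHm].
  - rewrite poisson_cumsum_S_O. simpl. rewrite poisson_weight_O_at0, C_n_0. reflexivity.
  - rewrite poisson_cumsum_S_S, IHm. simpl poisson_cumsum.
    rewrite poisson_weight_S_at0, !C_n_0. ring.
  - rewrite poisson_cumsum_S_O, IHk. simpl. now rewrite !C_n_n.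
  - rewrite poisson_cumsum_S_S, IHm, IHk.
    replace (S m + S k)%nat with (S (S (m + k))) by lia.
    replace (m + S k)%nat with (S (m + k)) by lia.
    replace (S m + k)%nat with (S (m + k)) by lia.
    rewrite Rplus_comm. apply pascal. lia.
Qed.

Lemma is_RInt_conv_poisson_weight m x :
  is_RInt (fun t => lam * poisson_weight 0 t * poisson_weight m (x - t)) 0 x
    (poisson_weight (S m) x).
Proof.
  set (G := fun t => - (lam * (x - t)) ^ S m / INR (fact (S m)) * exp (- lam * x)).
  replace (poisson_weight (S m) x) with (minus (G x) (G 0)).
  2:{ unfold G, minus, plus, opp, poisson_weight; simpl.
      rewrite Rminus_diag, Rminus_0_r, Rmult_0_r, Rmult_0_l.
      change (fact m + m * fact m)%nat with (fact (S m)).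
      field. apply INR_fact_neq_0. }
  apply (is_RInt_derive (V := R_CompleteNormedModule)).
  - intros t _. unfold G, poisson_weight. rewrite fact_simpl, mult_INR, S_INR.
    pose proof (INR_fact_lt_0 m). pose proof (pos_INR m).
    auto_derive; [auto|].
    replace (match m with 0%nat => 1 | S _ => INR m + 1 end) with (INR m + 1)
      by (destruct m; simpl; ring).
    replace (exp (- lam * x)) with (exp (- lam * t) * exp (- lam * (x - t)))
      by (rewrite <- exp_plus; f_equal; ring).
    simpl. unfold Rminus. field. lra.
  - intros t _. apply (ex_derive_continuous (K := R_AbsRing) (V := R_NormedModule)).
    unfold poisson_weight. auto_derive. repeat split; auto; apply INR_fact_neq_0.
Qed.

Lemma is_RInt_conv_poisson_cumsum k m x :
  is_RInt (fun t => lam * poisson_weight 0 t * poisson_cumsum k m (x - t)) 0 x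
    (poisson_cumsum k (S m) x - poisson_cumsum k (S m) 0 * poisson_weight 0 x).
Proof.
  revert m. induction k as [|k IHk]; intro m.
  - simpl. rewrite poisson_weight_S_at0, Rmult_0_l, Rminus_0_r.
    apply is_RInt_conv_poisson_weight.
  - induction m as [|m IHm].
    + eapply is_RInt_ext; [intros t _; rewrite (poisson_cumsum_S_O k (x - t)); reflexivity|].
      replace (poisson_cumsum (S k) 1 x - poisson_cumsum (S k) 1 0 * poisson_weight 0 x)
        with (poisson_cumsum k 1 x - poisson_cumsum k 1 0 * poisson_weight 0 x).
      * apply IHk.
      * rewrite !poisson_cumsum_S_S, !poisson_cumsum_S_O, !poisson_cumsum_O_r,
          poisson_weight_O_at0.
        ring.
    + apply (is_RInt_ext (fun t =>
        plus (lam * poisson_weight 0 t * poisson_cumsum (S k) m (x - t))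
             (lam * poisson_weight 0 t * poisson_cumsum k (S m) (x - t)))).
      { intros t _. rewrite (poisson_cumsum_S_S k m (x - t)). unfold plus; simpl. ring. }
      replace (poisson_cumsum (S k) (S (S m)) x
                 - poisson_cumsum (S k) (S (S m)) 0 * poisson_weight 0 x)
        with (plus (poisson_cumsum (S k) (S m) x
                      - poisson_cumsum (S k) (S m) 0 * poisson_weight 0 x)
                   (poisson_cumsum k (S (S m)) x
                      - poisson_cumsum k (S (S m)) 0 * poisson_weight 0 x))
        by (rewrite !(poisson_cumsum_S_S k (S m)); unfold plus; simpl; ring).
      apply (is_RInt_plus (V := R_NormedModule)); [apply IHm | apply IHk].
Qed.

Section PositiveRate.

Hypothesis lam_pos : 0 < lam.

Lemma is_lim_poisson_weight j : is_lim (poisson_weight j) p_infty 0.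
Proof.
  apply (is_lim_le_le_loc (fun _ => 0) (fun x => INR (S j) / lam * / x)).
  - exists 0. intros x Hx. split.
    + apply poisson_weight_ge0. nra.
    + replace (INR (S j) / lam * / x) with (INR (S j) / (lam * x)) by (field; lra).
      apply poisson_weight_le. nra.
  - apply is_lim_const.
  - replace (Finite 0) with (Rbar_mult (INR (S j) / lam) (Rbar_inv p_infty))
      by (simpl; f_equal; ring).
    apply is_lim_scal_l, is_lim_inv; [apply is_lim_id | discriminate].
Qed.

Lemma is_lim_poisson_cumsum k m : is_lim (poisson_cumsum k m) p_infty 0.
Proof.
  revert m. induction k as [|k IHk]; induction m as [|m IHm].
  - apply is_lim_poisson_weight.
  - apply is_lim_poisson_weight.
  - eapply is_lim_ext; [intro t; symmetry; apply poisson_cumsum_S_O|]. apply IHk.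
  - eapply is_lim_ext; [intro t; symmetry; apply poisson_cumsum_S_S|].
    replace (Finite 0) with (Finite (0 + 0)) by (f_equal; ring).
    apply is_lim_plus'; [apply IHm | apply IHk].
Qed.

Lemma is_RInt_gen_poisson_cumsum k m a :
  is_RInt_gen (poisson_cumsum k m) (at_point a) (Rbar_locally p_infty)
    (poisson_cumsum (S k) m a / lam).
Proof.
  set (F := fun t => - / lam * poisson_cumsum (S k) m t).
  assert (HF : forall t, is_derive F t (poisson_cumsum k m t)).
  { intro t. unfold F.
    replace (poisson_cumsum k m t) with (scal (- / lam) (- lam * poisson_cumsum k m t))
      by (unfold scal; simpl; unfold mult; simpl; field; lra).
    apply is_derive_scal, poisson_cumsum_derive. }
  assert (HD : Derive F = poisson_cumsum k m).
  { apply functional_extensionality. intro t. apply is_derive_unique, HF. }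
  replace (poisson_cumsum (S k) m a / lam) with (0 - F a) by (unfold F; field; lra).
  rewrite <- HD. apply is_RInt_gen_Derive.
  - apply filter_forall. intros. eexists. apply HF.
  - apply filter_forall. intros. rewrite HD. apply continuous_poisson_cumsum.
  - intros P HP. apply locally_singleton in HP. exact HP.
  - pose proof (is_lim_scal_l _ (- / lam) p_infty 0 (is_lim_poisson_cumsum (S k) m)) as H.
    simpl in H. rewrite Rmult_0_r in H. exact H.
Qed.

End PositiveRate.

End PoissonWeights.

Lemma binomial_C_pos n k : 0 < Binomial.C n k.
Proof.
  unfold Binomial.C. apply Rdiv_lt_0_compat; [apply INR_fact_lt_0|].
  apply Rmult_lt_0_compat; apply INR_fact_lt_0.
Qed.

Lemma Tbar_S fY s x : Tbar fY (S s) x = / mu fY s * int_to_infty (Tbar fY s) x.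
Proof. unfold Tbar, mu. simpl. now destruct (iter_pair fY s). Qed.

Lemma mu_S fY s : mu fY (S s) = int_to_infty (Tbar fY (S s)) 0.
Proof. unfold Tbar, mu. simpl. now destruct (iter_pair fY s). Qed.

Lemma int_to_infty_eq h g a v :
  (forall y, a <= y -> h y = g y) ->
  is_RInt_gen g (at_point a) (Rbar_locally p_infty) v -> int_to_infty h a = v.
Proof.
  intros Hhg Hg. apply is_RInt_gen_unique.
  refine (is_RInt_gen_ext _ _ _ _ Hg).
  apply Filter_prod with (fun u => u = a) (fun b => a < b).
  - reflexivity.
  - now exists a.
  - intros u b -> Hb y Hy. simpl in Hb, Hy. rewrite Rmin_left in Hy by lra.
    symmetry. apply Hhg. lra.
Qed.

Lemma gamma_density_S m lam x :
  0 <= x -> gamma_density (S m) lam x = lam * poisson_weight lam m x.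
Proof.
  intro Hx. unfold gamma_density, poisson_weight. destruct (Rle_dec 0 x); [|lra].
  replace (S m - 1)%nat with m by lia.
  simpl pow. rewrite Rpow_mult_distr. field. apply INR_fact_neq_0.
Qed.

Lemma exp_density_eq lam x : 0 <= x -> exp_density lam x = lam * poisson_weight lam 0 x.
Proof.
  intro Hx. unfold exp_density, poisson_weight. destruct (Rle_dec 0 x); [|lra].
  simpl. field.
Qed.

Lemma int_to_infty_poisson_cumsum lam c k m h a : 0 < lam ->
  (forall y, a <= y -> h y = c * poisson_cumsum lam k m y) ->
  int_to_infty h a = c * poisson_cumsum lam (S k) m a / lam.
Proof.
  intros Hlam Hh. apply (int_to_infty_eq _ _ _ _ Hh).
  unfold Rdiv. rewrite Rmult_assoc.
  apply (is_RInt_gen_scal (fun y => poisson_cumsum lam k m y)).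
  now apply is_RInt_gen_poisson_cumsum.
Qed.

Lemma Tbar_gamma_density lam m k : 0 < lam ->
  exists c, 0 < c /\
    (forall x, 0 <= x -> Tbar (gamma_density (S m) lam) k x = c * poisson_cumsum lam k m x) /\
    mu (gamma_density (S m) lam) k = c * Binomial.C (m + k) k / lam.
Proof.
  intro Hlam. induction k as [|k IHk].
  - exists lam. split; [exact Hlam|split].
    + intros x Hx. apply gamma_density_S, Hx.
    + unfold mu. simpl. rewrite Nat.add_0_r, C_n_0. field. lra.
  - destruct IHk as (c & Hc & HT & Hmu).
    pose proof (binomial_C_pos (m + k) k).
    exists (/ Binomial.C (m + k) k). split; [now apply Rinv_0_lt_compat|].
    assert (HT' : forall x, 0 <= x -> Tbar (gamma_density (S m) lam) (S k) x
                              = / Binomial.C (m + k) k * poisson_cumsum lam (S k) m x).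
    { intros x Hx.
      rewrite Tbar_S, Hmu, (int_to_infty_poisson_cumsum lam c k m _ x Hlam)
        by (intros y Hy; apply HT; lra).
      field. lra. }
    split; [exact HT'|].
    rewrite mu_S, (int_to_infty_poisson_cumsum lam _ (S k) m _ 0 Hlam)
      by (intros y Hy; apply HT'; lra).
    now rewrite poisson_cumsum_at0.
Qed.

Lemma iter_density_gamma_density lam m k x : 0 < lam -> 0 <= x ->
  iter_density (gamma_density (S m) lam) (S k) x
  = lam * poisson_cumsum lam k m x / Binomial.C (m + k) k.
Proof.
  intros Hlam Hx. unfold iter_density. simpl pred.
  destruct (Tbar_gamma_density lam m k Hlam) as (c & Hc & HT & Hmu).
  pose proof (binomial_C_pos (m + k) k).
  rewrite HT, Hmu by exact Hx. field. lra.
Qed.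

Lemma conv_exp_density_iter_gamma lam m k x : 0 < lam -> 0 <= x ->
  conv (exp_density lam) (f_iter_conv lam (S k) (S m)) x
  = lam / Binomial.C (m + k) k
    * (poisson_cumsum lam k (S m) x
       - poisson_cumsum lam k (S m) 0 * poisson_weight lam 0 x).
Proof.
  intros Hlam Hx. pose proof (binomial_C_pos (m + k) k).
  apply is_RInt_unique.
  apply (is_RInt_ext (fun t => scal (lam / Binomial.C (m + k) k)
           (lam * poisson_weight lam 0 t * poisson_cumsum lam k m (x - t)))).
  - intros t Ht. rewrite Rmin_left, Rmax_right in Ht by lra.
    unfold f_iter_conv. rewrite exp_density_eq, iter_density_gamma_density by lra.
    unfold scal; simpl; unfold mult; simpl. field. lra.
  - apply (is_RInt_scal (V := R_NormedModule)), is_RInt_conv_poisson_cumsum.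
Qed.

Theorem proposition2 (lam : R) (n s : nat) :
  0 < lam -> (2 <= n)%nat -> (2 <= s)%nat ->
  forall x : R, 0 <= x ->
    iter_density (gamma_density n lam) s x = f_iter_conv lam s n x /\
    f_iter_conv lam s n x =
      INR (n - 1) / INR (n + s - 2) * conv (exp_density lam) (f_iter_conv lam s (n - 1)) x
      + INR (s - 1) / INR (n + s - 2) * exp_density lam x.
Proof.
  intros Hlam Hn Hs x Hx. split; [reflexivity|].
  destruct n as [|[|m]]; try lia. destruct s as [|[|k]]; try lia.
  replace (S (S m) - 1)%nat with (S m) by lia.
  replace (S (S k) - 1)%nat with (S k) by lia.
  replace (S (S m) + S (S k) - 2)%nat with (S (S (m + k))) by lia.
  unfold f_iter_conv at 1.
  rewrite iter_density_gamma_density, conv_exp_density_iter_gamma, exp_density_eq,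
    poisson_cumsum_at0 by assumption.
  replace (S m + S k)%nat with (S (S (m + k))) by lia.
  replace (m + S k)%nat with (S (m + k)) by lia.
  replace (S m + k)%nat with (S (m + k)) by lia.
  pose proof (binomial_C_pos (S (m + k)) k).
  assert (Hpascal : Binomial.C (S (S (m + k))) (S k)
                    = Binomial.C (S (m + k)) k + Binomial.C (S (m + k)) (S k))
    by (symmetry; apply pascal; lia).
  assert (Hratio : Binomial.C (S (m + k)) (S k)
                   = INR (S m) / INR (S k) * Binomial.C (S (m + k)) k).
  { replace (S m) with (S (m + k) - k)%nat at 1 by lia. apply pascal_step3. lia. }
  rewrite Hpascal, Hratio, !S_INR, plus_INR.
  pose proof (pos_INR m). pose proof (pos_INR k).
  field. repeat split; try lra. nra.
Qed.
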